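(* Consider the forward-Euler DG update of cell means $$\bar{\mathbf u}_j^{n+1}=\bar{\mathbf u}_j^{n}-\frac{\Delta t}{\Delta x}\Big(\hat{\mathbf f}(\mathbf u^n_{jQ},\mathbf u^n_{(j+1)1})-\hat{\mathbf f}(\mathbf u^n_{(j-1)Q},\mathbf u^n_{j1})\Big)+\Delta t\sum_{q=1}^Q w_q\Big(-\sigma_a\mathbf u^n_{jq}+\sigma_s\mathbf r(\mathbf u^n_{jq})+\langle\mathbf b\,S(t^n,x_{jq},\cdot)\rangle\Big),$$ where $\hat{\mathbf f}(\mathbf v,\mathbf w)=\tfrac12\big(\mathbf f(\mathbf v)+\mathbf f(\mathbf w)-(\mathbf w-\mathbf v)\big)$ and $\bar{\mathbf u}^n_j=\frac1{\Delta x}\int_{I_j}\mathbf u_j(t^n,x)\,dx$. Assume $\sigma_a,\sigma_s\ge0$ are constants, $\sigma_t:=\sigma_a+\sigma_s$, $S\ge0$, $k\le 2Q-3$, that all point values $\mathbf u^n_{jq}$ ($q=1,\dots,Q$) together with $\mathbf u^n_{(j-1)Q}$ and $\mathbf u^n_{(j+1)1}$ lie in $\mathcal R_{\mathbf b}$, and that the CFL condition $$\frac{\Delta t}{\Delta x}<w_Q\,(1-\sigma_t\Delta t)$$ holds, where $w_Q$ is the last weight of the $Q$-point Gauss–Lobatto rule on $[-1/2,1/2]$. Then $\bar{\mathbf u}^{n+1}_j\in\mathcal R_{\mathbf b}$. The same conclusion holds with $\mathcal R_{\mathbf b}$ replaced by the numerically realizable set $\mathcal R^{\mathcal Q}_{\mathbf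 b}$ when all angular integrals (in $\mathbf f$, $\mathbf r$, $\langle\mathbf bS\rangle$ and the closure) are replaced by the angular quadrature $\mathcal Q$.
   Context: Setting: slab-geometry kinetic equation $\partial_t\psi+\mu\partial_x\psi+\sigma_a\psi=\sigma_s\mathcal C(\psi)+S$, with collision operator $\mathcal C(\psi)(\mu)=\int_{-1}^1T(\mu,\mu')\psi(\mu')d\mu'-\int_{-1}^1T(\mu',\mu)\psi(\mu)d\mu'$, kernel $T>0$ with $\int_{-1}^1T(\mu',\mu)d\mu'\equiv1$. Notation: $\langle\phi\rangle=\int_{-1}^1\phi\,d\mu$; basis $\mathbf b=(b_0,\dots,b_N)^T$ of bounded functions with $b_0\equiv1$; realizable set $\mathcal R_{\mathbf b}=\{\mathbf u:\exists\phi\ge0,\ \langle\phi\rangle>0,\ \mathbf u=\langle\mathbf b\phi\rangle\}$. Angular quadrature $\mathcal Q$: nodes $\mu_i\in[-1,1]$, weights $w_i>0$, $i=1,\dots,n_{\mathcal Q}$; numerically realizable set $\mathcal R^{\mathcal Q}_{\mathbf b}=\{\mathbf u:\exists f_i>0,\ \mathbf u=\sum_i w_i\mathbf b(\mu_i)f_i\}$. Maxwell–Boltzmann entropy closure: for realizable $\mathbf u$ the ansatz $\hat\psi_{\mathbf u}=\exp(\mathbf b^T\hat{\boldsymbol\alpha}(\mathbf u))$ with $\langle\mathbf b\hat\psi_{\mathbf u}\rangle=\mathbf u$ exists; $\mathbf f(\mathbf u)=\langle\mu\mathbf b\hat\psi_{\mathbf u}\rangle$, $\mathbf r(\mathbf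 u)=\langle\mathbf b\,\mathcal C(\hat\psi_{\mathbf u})\rangle$. Spatial discretization: cells $I_j=(x_{j-1/2},x_{j+1/2})$ of width $\Delta x$ with centers $x_j$; on $I_j$ the approximation $\mathbf u_j(t,x)$ is a polynomial in $x$ of degree at most $k$ (expanded in Legendre polynomials scaled to the cell, so the cell mean is the zeroth coefficient). The $Q$-point Gauss–Lobatto rule on $[-1/2,1/2]$ has nodes $-1/2=y_1<\dots<y_Q=1/2$ and positive weights $w_q$ summing to $1$ (with $w_1=w_Q$), exact for polynomials of degree $\le 2Q-3$; $x_{jq}=x_j+y_q\Delta x$ and $\mathbf u^n_{jq}=\mathbf u_j(t^n,x_{jq})$ (so $\mathbf u^n_{j1}$, $\mathbf u^n_{jQ}$ are the values at the left and right cell edges; for boundary cells the neighbor values are given boundary moment vectors). *)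

From Stdlib Require Import Reals.
Open Scope R_scope.

(* Vectors in R^{N+1} are modelled as functions nat -> R, only indices 0..N matter. *)

Fixpoint rsum (n : nat) (g : nat -> R) : R :=
  match n with
  | O => 0
  | S n' => rsum n' g + g n
  end.

Definition IntAB (f : R -> R) (a b v : R) : Prop :=
  exists pr : Riemann_integrable f a b, RiemannInt pr = v.

Definition Realizable (N : nat) (b : nat -> R -> R) (u : nat -> R) : Prop :=
  exists phi : R -> R,
    (forall mu, -1 <= mu <= 1 -> 0 <= phi mu) /\
    (exists m, IntAB phi (-1) 1 m /\ 0 < m) /\
    (forall l, (l <= N)%nat -> IntAB (fun mu => b l mu * phi mu) (-1) 1 (u l)).

Definition NumRealizable (N : nat) (b : nat -> R -> R) (nQ : nat)
  (muQ wQ : nat -> R) (u : nat -> R) : Prop :=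
  exists fv : nat -> R,
    (forall i, (1 <= i <= nQ)%nat -> 0 < fv i) /\
    (forall l, (l <= N)%nat -> u l = rsum nQ (fun i => wQ i * b l (muQ i) * fv i)).

Definition ansatz (N : nat) (b : nat -> R -> R) (alpha : nat -> R) (mu : R) : R :=
  exp (sum_f_R0 (fun l => b l mu * alpha l) N).

Definition IsCollision (T : R -> R -> R) (psi Cpsi : R -> R) : Prop :=
  forall mu, -1 <= mu <= 1 ->
    exists g lo,
      IntAB (fun mu' => T mu mu' * psi mu') (-1) 1 g /\
      IntAB (fun mu' => T mu' mu) (-1) 1 lo /\
      Cpsi mu = g - lo * psi mu.

Definition fhat (ff : (nat -> R) -> nat -> R) (v w : nat -> R) (l : nat) : R :=
  / 2 * (ff v l + ff w l - (w l - v l)).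

(* forward-Euler DG update of the cell mean.
   pv q = u^n_{jq} (q = 1..Q), uL = u^n_{(j-1)Q}, uR = u^n_{(j+1)1},
   Sm q = <b S(t^n, x_{jq}, .)> *)
Definition dg_update (Q : nat) (wGL : nat -> R) (dt dx sa ss : R)
  (ff rr : (nat -> R) -> nat -> R) (Sm : nat -> nat -> R)
  (ubar : nat -> R) (pv : nat -> nat -> R) (uL uR : nat -> R) : nat -> R :=
  fun l =>
    ubar l - dt / dx * (fhat ff (pv Q) uR l - fhat ff uL (pv 1%nat) l)
    + dt * rsum Q (fun q => wGL q * (- sa * pv q l + ss * rr (pv q) l + Sm q l)).

Definition fluxQ (N : nat) (b : nat -> R -> R) (nQ : nat) (muQ wQ : nat -> R)
  (alphaQ : (nat -> R) -> nat -> R) (v : nat -> R) (l : nat) : R :=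
  rsum nQ (fun i => wQ i * muQ i * b l (muQ i) * ansatz N b (alphaQ v) (muQ i)).

Definition collQ (T : R -> R -> R) (nQ : nat) (muQ wQ : nat -> R)
  (psi : R -> R) (mu : R) : R :=
  rsum nQ (fun i' => wQ i' * T mu (muQ i') * psi (muQ i'))
  - rsum nQ (fun i' => wQ i' * T (muQ i') mu) * psi mu.

Definition collmomQ (N : nat) (b : nat -> R -> R) (T : R -> R -> R) (nQ : nat)
  (muQ wQ : nat -> R) (alphaQ : (nat -> R) -> nat -> R) (v : nat -> R) (l : nat) : R :=
  rsum nQ (fun i => wQ i * b l (muQ i) *
                    collQ T nQ muQ wQ (ansatz N b (alphaQ v)) (muQ i)).

Definition srcQ (b : nat -> R -> R) (nQ : nat) (muQ wQ : nat -> R)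
  (S : R -> R -> R -> R) (tn : R) (xq : nat -> R) (q l : nat) : R :=
  rsum nQ (fun i => wQ i * b l (muQ i) * S tn (xq q) (muQ i)).

From Stdlib Require Import Reals Lra Lia FunctionalExtensionality IndefiniteDescription.
From Coquelicot Require RInt.
Open Scope R_scope.

(* The updated cell mean is the moment vector of an explicit angular density: the same update
   applied to the closure densities psi_u = exp(b . alpha(u)) of the point values, with the
   collision moment replaced by C(psi) and the source moment by S.  Exactness of the
   Gauss-Lobatto rule (k <= 2Q-3) turns the cell mean into sum_q w_q u_jq, so by linearity the
   density has the updated moments.  Regrouped, the density is
     sum_q w_q [(1 - sigma_t dt) psi_q + sigma_s dt (C(psi_q) + psi_q) + dt S_q]
     - dt/(2dx) [(1+mu) psi_Q + (1-mu) psi_1] + (nonnegative neighbour terms),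
   where C(psi) + psi is the gain term, hence nonnegative.  Since w_1 = w_Q, the CFL condition
   lets the two edge nodes absorb the flux terms, leaving at least
   (w_Q (1 - sigma_t dt) - dt/dx) psi_Q > 0.  With the angular quadrature in place of the
   integrals the argument is verbatim the same. *)

Lemma rsum_ext n f g : (forall i, (1 <= i <= n)%nat -> f i = g i) -> rsum n f = rsum n g.
Proof.
  induction n as [|n IH]; intros H; simpl; [reflexivity|].
  rewrite IH by (intros; apply H; lia). rewrite H by lia. reflexivity.
Qed.

Lemma rsum_plus n f g : rsum n (fun i => f i + g i) = rsum n f + rsum n g.
Proof. induction n as [|n IH]; simpl; [ring|]. rewrite IH. ring. Qed.

Lemma rsum_scal n c f : rsum n (fun i => c * f i) = c * rsum n f.
Proof. induction n as [|n IH]; simpl; [ring|]. rewrite IH. ring. Qed.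

Lemma rsum_nonneg n f : (forall i, (1 <= i <= n)%nat -> 0 <= f i) -> 0 <= rsum n f.
Proof.
  induction n as [|n IH]; intros H; simpl; [lra|].
  assert (0 <= rsum n f) by (apply IH; intros; apply H; lia).
  pose proof (H (S n) ltac:(lia)). lra.
Qed.

Lemma rsum_ge_term n f i :
  (forall j, (1 <= j <= n)%nat -> 0 <= f j) -> (1 <= i <= n)%nat -> f i <= rsum n f.
Proof.
  induction n as [|n IH]; intros H Hi; simpl; [lia|].
  destruct (Nat.eq_dec i (S n)) as [->|Hne].
  - assert (0 <= rsum n f) by (apply rsum_nonneg; intros; apply H; lia). lra.
  - assert (f i <= rsum n f) by (apply IH; [intros; apply H|]; lia).
    pose proof (H (S n) ltac:(lia)). lra.
Qed.

Lemma rsum_ge_first_last n f :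
  (2 <= n)%nat -> (forall j, (1 <= j <= n)%nat -> 0 <= f j) -> f 1%nat + f n <= rsum n f.
Proof.
  intros Hn H. destruct n as [|n]; [lia|]. simpl.
  assert (f 1%nat <= rsum n f) by (apply rsum_ge_term; [intros; apply H|]; lia). lra.
Qed.

Lemma IntAB_zero a b : IntAB (fun _ => 0) a b 0.
Proof.
  exists (RiemannInt_P14 a b 0).
  pose proof (RiemannInt_P15 (RiemannInt_P14 a b 0)) as H.
  unfold fct_cte in H. rewrite H. ring.
Qed.

Lemma IntAB_axpy a b f g v w l :
  IntAB f a b v -> IntAB g a b w -> IntAB (fun x => f x + l * g x) a b (v + l * w).
Proof.
  intros [p1 H1] [p2 H2]. exists (RiemannInt_P10 l p1 p2).
  rewrite (RiemannInt_P13 p1 p2), H1, H2. reflexivity.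
Qed.

Lemma IntAB_unique f a b v w : IntAB f a b v -> IntAB f a b w -> v = w.
Proof. intros [p1 <-] [p2 <-]. apply RiemannInt_P5. Qed.

Lemma IntAB_le f g a b v w :
  a <= b -> (forall x, a < x < b -> f x <= g x) ->
  IntAB f a b v -> IntAB g a b w -> v <= w.
Proof.
  intros Hab H [pf <-] [pg <-]. apply RiemannInt_P19; auto.
Qed.

Section ChangeOfVariables.
Import Coquelicot.Hierarchy Coquelicot.RInt.

Lemma IntAB_comp_lin f u v a b l :
  IntAB f (u * a + v) (u * b + v) l -> IntAB (fun y => u * f (u * y + v)) a b l.
Proof.
  intros [pr Hpr].
  assert (Hf : is_RInt f (u * a + v) (u * b + v) l).
  { pose proof (RInt_correct _ _ _ (ex_RInt_Reals_1 _ _ _ pr)) as H.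
    rewrite (RInt_Reals _ _ _ pr), Hpr in H. exact H. }
  pose proof (is_RInt_comp_lin f u v a b l Hf) as Hg.
  exists (ex_RInt_Reals_0 _ _ _ (ex_intro _ l Hg)).
  rewrite <- RInt_Reals. apply is_RInt_unique. exact Hg.
Qed.

End ChangeOfVariables.

Definition fhat_density (psi : (nat -> R) -> R -> R) (v w : nat -> R) (mu : R) : R :=
  / 2 * (mu * psi v mu + mu * psi w mu - (psi w mu - psi v mu)).

Definition update_density (Q : nat) (w : nat -> R) (dt dx sa ss : R)
  (psi : (nat -> R) -> R -> R) (C Sq : nat -> R -> R)
  (pv : nat -> nat -> R) (uL uR : nat -> R) (mu : R) : R :=
  rsum Q (fun q => w q * psi (pv q) mu)
  - dt / dx * (fhat_density psi (pv Q) uR mu - fhat_density psi uL (pv 1%nat) mu)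
  + dt * rsum Q (fun q => w q * (- sa * psi (pv q) mu + ss * C q mu + Sq q mu)).

(* [mom f v] reads "v is the angular moment of f"; it is instantiated both with integration
   over [-1, 1] and with the angular quadrature. *)
Section LinearMoments.

Variable mom : (R -> R) -> R -> Prop.
Hypothesis mom_zero : mom (fun _ => 0) 0.
Hypothesis mom_axpy :
  forall f g v w l, mom f v -> mom g w -> mom (fun x => f x + l * g x) (v + l * w).

Lemma mom_ext f g v w : (forall x, f x = g x) -> v = w -> mom f v -> mom g w.
Proof.
  intros Hfg <- Hf. replace g with f by (apply functional_extensionality; exact Hfg).
  exact Hf.
Qed.

Lemma mom_scale c f v : mom f v -> mom (fun x => c * f x) (c * v).
Proof.
  intros Hf. eapply mom_ext; [| |exact (mom_axpy _ _ _ _ c mom_zero Hf)]; intros; cbv beta; ring.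
Qed.

Lemma mom_add f g v w : mom f v -> mom g w -> mom (fun x => f x + g x) (v + w).
Proof.
  intros Hf Hg. eapply mom_ext; [| |exact (mom_axpy _ _ _ _ 1 Hf Hg)]; intros; cbv beta; ring.
Qed.

Lemma mom_rsum n (g : R -> R) (F : nat -> R -> R) (v : nat -> R) :
  (forall q, (1 <= q <= n)%nat -> mom (fun x => g x * F q x) (v q)) ->
  mom (fun x => g x * rsum n (fun q => F q x)) (rsum n v).
Proof.
  induction n as [|n IH]; intros H; simpl.
  - eapply mom_ext; [| |exact mom_zero]; intros; cbv beta; ring.
  - pose proof (mom_add _ _ _ _ (IH ltac:(intros; apply H; lia)) (H (S n) ltac:(lia))) as Hn.
    eapply mom_ext; [| |exact Hn]; intros; cbv beta; ring.
Qed.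

Lemma mom_sum_f_R0 n (F : nat -> R -> R) (v : nat -> R) :
  (forall i, (i <= n)%nat -> mom (F i) (v i)) ->
  mom (fun x => sum_f_R0 (fun i => F i x) n) (sum_f_R0 v n).
Proof.
  induction n as [|n IH]; intros H; simpl.
  - apply H; lia.
  - apply mom_add; [apply IH; intros; apply H|apply H]; lia.
Qed.

Lemma mom_fhat_density (g : R -> R) psi ff v w l :
  mom (fun mu => g mu * psi v mu) (v l) -> mom (fun mu => mu * g mu * psi v mu) (ff v l) ->
  mom (fun mu => g mu * psi w mu) (w l) -> mom (fun mu => mu * g mu * psi w mu) (ff w l) ->
  mom (fun mu => g mu * fhat_density psi v w mu) (fhat ff v w l).
Proof.
  intros Hv Hfv Hw Hfw.
  pose proof (mom_scale (/ 2) _ _ (mom_add _ _ _ _ (mom_add _ _ _ _ Hfv Hfw)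
                (mom_scale (-1) _ _ (mom_axpy _ _ _ _ (-1) Hw Hv)))) as H.
  eapply mom_ext; [| |exact H]; intros; unfold fhat_density, fhat; cbv beta; ring.
Qed.

Lemma mom_update_density (N Q : nat) (b : nat -> R -> R) (Adm : (nat -> R) -> Prop)
  (w : nat -> R) (dt dx sa ss : R) (psi : (nat -> R) -> R -> R) (C Sq : nat -> R -> R)
  (ff rr : (nat -> R) -> nat -> R) (Sm : nat -> nat -> R)
  (ubar : nat -> R) (pv : nat -> nat -> R) (uL uR : nat -> R) :
  (1 <= Q)%nat ->
  (forall l, (l <= N)%nat -> ubar l = rsum Q (fun q => w q * pv q l)) ->
  (forall u, Adm u -> forall l, (l <= N)%nat -> mom (fun mu => b l mu * psi u mu) (u l)) ->
  (forall u, Adm u -> forall l, (l <= N)%nat ->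
     mom (fun mu => mu * b l mu * psi u mu) (ff u l)) ->
  (forall q, (1 <= q <= Q)%nat -> forall l, (l <= N)%nat ->
     mom (fun mu => b l mu * C q mu) (rr (pv q) l)) ->
  (forall q, (1 <= q <= Q)%nat -> forall l, (l <= N)%nat ->
     mom (fun mu => b l mu * Sq q mu) (Sm q l)) ->
  (forall q, (1 <= q <= Q)%nat -> Adm (pv q)) -> Adm uL -> Adm uR ->
  forall l, (l <= N)%nat ->
  mom (fun mu => b l mu * update_density Q w dt dx sa ss psi C Sq pv uL uR mu)
      (dg_update Q w dt dx sa ss ff rr Sm ubar pv uL uR l).
Proof.
  intros HQ Hmean Hmom Hflux Hcoll Hsrc Hpv HL HR l Hl.
  assert (Hcell : mom (fun mu => b l mu * rsum Q (fun q => w q * psi (pv q) mu))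
                      (rsum Q (fun q => w q * pv q l))).
  { apply mom_rsum. intros q Hq.
    eapply mom_ext; [| |exact (mom_scale (w q) _ _ (Hmom _ (Hpv q Hq) l Hl))];
      intros; cbv beta; ring. }
  assert (Hsource : mom
    (fun mu => b l mu * rsum Q (fun q => w q * (- sa * psi (pv q) mu + ss * C q mu + Sq q mu)))
    (rsum Q (fun q => w q * (- sa * pv q l + ss * rr (pv q) l + Sm q l)))).
  { apply mom_rsum. intros q Hq.
    pose proof (mom_scale (w q) _ _ (mom_add _ _ _ _
       (mom_axpy _ _ _ _ ss (mom_scale (- sa) _ _ (Hmom _ (Hpv q Hq) l Hl)) (Hcoll q Hq l Hl))
       (Hsrc q Hq l Hl))) as H.
    eapply mom_ext; [| |exact H]; intros; cbv beta; ring. }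
  assert (HQ1 : Adm (pv 1%nat) /\ Adm (pv Q)) by (split; apply Hpv; lia).
  destruct HQ1 as [H1 HQ'].
  assert (Hright := mom_fhat_density (b l) psi ff (pv Q) uR l
    (Hmom _ HQ' l Hl) (Hflux _ HQ' l Hl) (Hmom _ HR l Hl) (Hflux _ HR l Hl)).
  assert (Hleft := mom_fhat_density (b l) psi ff uL (pv 1%nat) l
    (Hmom _ HL l Hl) (Hflux _ HL l Hl) (Hmom _ H1 l Hl) (Hflux _ H1 l Hl)).
  pose proof (mom_axpy _ _ _ _ dt (mom_axpy _ _ _ _ (- (dt / dx)) Hcell
                (mom_axpy _ _ _ _ (-1) Hright Hleft)) Hsource) as H.
  eapply mom_ext; [| |exact H].
  - intros mu. unfold update_density. cbv beta. ring.
  - unfold dg_update. rewrite (Hmean l Hl). ring.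
Qed.

End LinearMoments.

Definition quad_moment (nQ : nat) (muQ wQ : nat -> R) (f : R -> R) (v : R) : Prop :=
  v = rsum nQ (fun i => wQ i * f (muQ i)).

Lemma quad_moment_zero nQ muQ wQ : quad_moment nQ muQ wQ (fun _ => 0) 0.
Proof.
  unfold quad_moment. transitivity (0 * rsum nQ wQ); [ring|].
  rewrite <- rsum_scal. apply rsum_ext; intros; ring.
Qed.

Lemma quad_moment_axpy nQ muQ wQ f g v v' l :
  quad_moment nQ muQ wQ f v -> quad_moment nQ muQ wQ g v' ->
  quad_moment nQ muQ wQ (fun x => f x + l * g x) (v + l * v').
Proof.
  unfold quad_moment. intros -> ->.
  rewrite <- rsum_scal, <- rsum_plus. apply rsum_ext; intros; ring.
Qed.

Lemma shifted_poly_expand (c : nat -> R) x0 h t K :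
  sum_f_R0 (fun m => c m * (x0 + t * h) ^ m) K =
  sum_f_R0 (fun m => sum_f_R0 (fun i =>
    c m * (Binomial.C m i * x0 ^ i * h ^ (m - i)) * t ^ (m - i)) m) K.
Proof.
  apply sum_eq. intros m _. rewrite binomial, scal_sum.
  apply sum_eq. intros i _. rewrite Rpow_mult_distr. ring.
Qed.

Section GaussLobatto.

Variables (Q : nat) (y w : nat -> R).
Hypothesis exact_monomial : forall m, (m <= 2 * Q - 3)%nat ->
  IntAB (fun t => t ^ m) (- / 2) (/ 2) (rsum Q (fun q => w q * y q ^ m)).

Lemma gauss_lobatto_shifted_poly K (c : nat -> R) x0 h :
  (K <= 2 * Q - 3)%nat ->
  IntAB (fun t => sum_f_R0 (fun m => c m * (x0 + t * h) ^ m) K) (- / 2) (/ 2)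
        (rsum Q (fun q => w q * sum_f_R0 (fun m => c m * (x0 + y q * h) ^ m) K)).
Proof.
  intros HK.
  (* The pairs on which integral and quadrature agree form a linear relation containing the
     monomials of degree <= 2Q-3. *)
  set (agree := fun f v => IntAB f (- / 2) (/ 2) v /\ quad_moment Q y w f v).
  assert (agree_zero : agree (fun _ => 0) 0).
  { split; [apply IntAB_zero|apply quad_moment_zero]. }
  assert (agree_axpy : forall f g v v' l, agree f v -> agree g v' ->
            agree (fun x => f x + l * g x) (v + l * v')).
  { intros f g v v' l [Hf Hqf] [Hg Hqg].
    split; [apply IntAB_axpy|apply quad_moment_axpy]; assumption. }
  assert (Hpoly : agree
    (fun t => sum_f_R0 (fun m => sum_f_R0 (fun i =>
        c m * (Binomial.C m i * x0 ^ i * h ^ (m - i)) * t ^ (m - i)) m) K)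
    (sum_f_R0 (fun m => sum_f_R0 (fun i =>
        c m * (Binomial.C m i * x0 ^ i * h ^ (m - i)) * rsum Q (fun q => w q * y q ^ (m - i))) m) K)).
  { apply (mom_sum_f_R0 agree agree_axpy). intros m Hm.
    apply (mom_sum_f_R0 agree agree_axpy). intros i Hi.
    apply (mom_scale agree agree_zero agree_axpy).
    split; [apply exact_monomial; lia|reflexivity]. }
  destruct Hpoly as [Hint Hval]. rewrite Hval in Hint.
  eapply (mom_ext (fun f v => IntAB f (- / 2) (/ 2) v)); [| |exact Hint].
  - intros t. symmetry. apply shifted_poly_expand.
  - apply rsum_ext. intros q _. f_equal. symmetry. apply shifted_poly_expand.
Qed.

Lemma cell_mean_gauss_lobatto K (c : nat -> R) xj dx ubar :
  (K <= 2 * Q - 3)%nat -> 0 < dx ->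
  IntAB (fun x => sum_f_R0 (fun m => c m * x ^ m) K) (xj - dx / 2) (xj + dx / 2) (dx * ubar) ->
  ubar = rsum Q (fun q => w q * sum_f_R0 (fun m => c m * (xj + y q * dx) ^ m) K).
Proof.
  intros HK Hdx Hmean.
  assert (Hsub : IntAB (fun t => dx * sum_f_R0 (fun m => c m * (xj + t * dx) ^ m) K)
                       (- / 2) (/ 2) (dx * ubar)).
  { replace (xj - dx / 2) with (dx * - / 2 + xj) in Hmean by field.
    replace (xj + dx / 2) with (dx * / 2 + xj) in Hmean by field.
    eapply (mom_ext (fun f v => IntAB f (- / 2) (/ 2) v));
      [| |exact (IntAB_comp_lin _ _ _ _ _ _ Hmean)].
    - intros t. cbv beta. f_equal. apply sum_eq. intros m _. f_equal. f_equal. ring.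
    - reflexivity. }
  pose proof (mom_scale (fun f v => IntAB f (- / 2) (/ 2) v) (IntAB_zero _ _)
                (fun f g v v' l => IntAB_axpy _ _ f g v v' l) dx _ _
                (gauss_lobatto_shifted_poly K c xj dx HK)) as Hquad.
  apply (Rmult_eq_reg_l dx); [|lra].
  exact (IntAB_unique _ _ _ _ _ Hsub Hquad).
Qed.

End GaussLobatto.

Lemma update_density_regroup Q w dt dx sa ss psi C Sq pv uL uR mu :
  update_density Q w dt dx sa ss psi C Sq pv uL uR mu =
  rsum Q (fun q => w q * ((1 - (sa + ss) * dt) * psi (pv q) mu
                          + dt * ss * (C q mu + psi (pv q) mu) + dt * Sq q mu))
  - dt / dx * / 2 * ((1 + mu) * psi (pv Q) mu - (1 - mu) * psi uR mu
                     - (1 + mu) * psi uL mu + (1 - mu) * psi (pv 1%nat) mu).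
Proof.
  unfold update_density, fhat_density.
  rewrite (rsum_ext Q (fun q => w q * ((1 - (sa + ss) * dt) * psi (pv q) mu
                          + dt * ss * (C q mu + psi (pv q) mu) + dt * Sq q mu))
    (fun q => w q * psi (pv q) mu + dt * (w q * (- sa * psi (pv q) mu + ss * C q mu + Sq q mu))))
    by (intros; ring).
  rewrite rsum_plus, rsum_scal. ring.
Qed.

Lemma update_density_lower_bound Q w dt dx sa ss psi C Sq pv uL uR mu :
  (2 <= Q)%nat -> (forall q, (1 <= q <= Q)%nat -> 0 < w q) -> w 1%nat = w Q ->
  -1 <= mu <= 1 -> 0 <= dt -> 0 <= dt / dx -> 0 <= sa -> 0 <= ss ->
  dt / dx <= w Q * (1 - (sa + ss) * dt) ->
  (forall q, (1 <= q <= Q)%nat -> 0 <= psi (pv q) mu) ->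
  (forall q, (1 <= q <= Q)%nat -> 0 <= C q mu + psi (pv q) mu) ->
  (forall q, (1 <= q <= Q)%nat -> 0 <= Sq q mu) ->
  0 <= psi uL mu -> 0 <= psi uR mu ->
  (w Q * (1 - (sa + ss) * dt) - dt / dx) * psi (pv Q) mu
    <= update_density Q w dt dx sa ss psi C Sq pv uL uR mu.
Proof.
  intros HQ Hw Hsym Hmu Hdt Hcfl0 Hsa Hss Hcfl HP HCP HS HL HR.
  set (A := 1 - (sa + ss) * dt) in *.
  set (P := fun q => psi (pv q) mu).
  change (forall q, (1 <= q <= Q)%nat -> 0 <= P q) in HP.
  set (D := fun q => A * P q + dt * ss * (C q mu + P q) + dt * Sq q mu).
  assert (HA : 0 <= A).
  { assert (0 < w Q) by (apply Hw; lia). apply (Rmult_le_reg_l (w Q)); lra. }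
  assert (HD : forall q, (1 <= q <= Q)%nat -> w q * A * P q <= w q * D q).
  { intros q Hq. pose proof (Hw q Hq).
    assert (0 <= dt * ss * (C q mu + P q) + dt * Sq q mu).
    { apply Rplus_le_le_0_compat; apply Rmult_le_pos; try apply Rmult_le_pos;
        auto using HCP, HS. }
    assert (0 <= w q * (dt * ss * (C q mu + P q) + dt * Sq q mu)) by (apply Rmult_le_pos; lra).
    unfold D. lra. }
  assert (Hends : w 1%nat * D 1%nat + w Q * D Q <= rsum Q (fun q => w q * D q)).
  { apply (rsum_ge_first_last Q (fun q => w q * D q) HQ). intros q Hq.
    pose proof (HD q Hq). pose proof (Hw q Hq). pose proof (HP q Hq).
    assert (0 <= w q * A * P q) by (apply Rmult_le_pos; [apply Rmult_le_pos|]; lra). lra. }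
  pose proof (HD 1%nat ltac:(lia)). pose proof (HD Q ltac:(lia)).
  pose proof (HP 1%nat ltac:(lia)). pose proof (HP Q ltac:(lia)).
  rewrite update_density_regroup, (rsum_ext Q _ (fun q => w q * D q)) by (intros; reflexivity).
  fold A (P 1%nat) (P Q). rewrite Hsym in *.
  assert (0 <= dt / dx * (1 - mu) * psi uR mu) by (apply Rmult_le_pos; [apply Rmult_le_pos|]; lra).
  assert (0 <= dt / dx * (1 + mu) * psi uL mu) by (apply Rmult_le_pos; [apply Rmult_le_pos|]; lra).
  assert (0 <= dt / dx * (1 - mu) * P Q) by (apply Rmult_le_pos; [apply Rmult_le_pos|]; lra).
  assert (0 <= dt / dx * (1 + mu) * P 1%nat) by (apply Rmult_le_pos; [apply Rmult_le_pos|]; lra).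
  assert (0 <= (w Q * A - dt / dx) * P 1%nat) by (apply Rmult_le_pos; lra).
  nra.
Qed.

Lemma ansatz_pos N b alpha mu : 0 < ansatz N b alpha mu.
Proof. apply exp_pos. Qed.

Lemma collision_gain_nonneg T psi Cpsi mu :
  (forall mu', -1 <= mu' <= 1 -> 0 < T mu mu') ->
  IntAB (fun mu' => T mu' mu) (-1) 1 1 ->
  (forall mu', -1 <= mu' <= 1 -> 0 <= psi mu') ->
  IsCollision T psi Cpsi -> -1 <= mu <= 1 -> 0 <= Cpsi mu + psi mu.
Proof.
  intros HT Hnorm Hpsi Hcoll Hmu.
  destruct (Hcoll mu Hmu) as (gain & loss & Hgain & Hloss & ->).
  rewrite <- (IntAB_unique _ _ _ _ _ Hnorm Hloss).
  assert (0 <= gain).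
  { refine (IntAB_le (fun _ => 0) _ (-1) 1 0 gain _ _ (IntAB_zero _ _) Hgain); [lra|].
    intros x Hx. apply Rmult_le_pos; [left; apply HT|apply Hpsi]; lra. }
  lra.
Qed.

Lemma collQ_gain_nonneg T nQ muQ wQ psi mu :
  (forall i, (1 <= i <= nQ)%nat -> 0 < wQ i) ->
  (forall i, (1 <= i <= nQ)%nat -> 0 < T mu (muQ i)) ->
  rsum nQ (fun i => wQ i * T (muQ i) mu) = 1 ->
  (forall i, (1 <= i <= nQ)%nat -> 0 <= psi (muQ i)) ->
  0 <= collQ T nQ muQ wQ psi mu + psi mu.
Proof.
  intros Hw HT Hnorm Hpsi. unfold collQ. rewrite Hnorm.
  assert (0 <= rsum nQ (fun i => wQ i * T mu (muQ i) * psi (muQ i))).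
  { apply rsum_nonneg. intros i Hi.
    pose proof (Hw i Hi). pose proof (HT i Hi). pose proof (Hpsi i Hi).
    apply Rmult_le_pos; [apply Rmult_le_pos|]; lra. }
  lra.
Qed.

Lemma Realizable_mass_pos N b u :
  (forall mu, b 0%nat mu = 1) -> Realizable N b u -> 0 < u 0%nat.
Proof.
  intros Hb0 (phi & _ & (m & Hm & Hmpos) & Hmom).
  assert (Hu0 := Hmom 0%nat ltac:(lia)).
  assert (IntAB phi (-1) 1 (u 0%nat)).
  { eapply (mom_ext (fun f v => IntAB f (-1) 1 v)); [| |exact Hu0];
      intros; cbv beta; rewrite ?Hb0; ring. }
  rewrite <- (IntAB_unique _ _ _ _ _ Hm H). exact Hmpos.
Qed.

Lemma Realizable_intro N b u phi :
  (forall mu, b 0%nat mu = 1) -> (forall mu, -1 <= mu <= 1 -> 0 <= phi mu) ->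
  (forall l, (l <= N)%nat -> IntAB (fun mu => b l mu * phi mu) (-1) 1 (u l)) -> 0 < u 0%nat ->
  Realizable N b u.
Proof.
  intros Hb0 Hphi Hmom Hmass. exists phi. split; [exact Hphi|split; [|exact Hmom]].
  exists (u 0%nat). split; [|exact Hmass].
  eapply (mom_ext (fun f v => IntAB f (-1) 1 v)); [| |exact (Hmom 0%nat ltac:(lia))];
    intros; cbv beta; rewrite ?Hb0; ring.
Qed.

Section RealizabilityOfUpdate.

Variables (N Q : nat) (b : nat -> R -> R) (T : R -> R -> R) (w : nat -> R).
Variables (dt dx sa ss : R) (Src : R -> R -> R -> R) (tn : R) (xq : nat -> R).
Variables (ubar : nat -> R) (pv : nat -> nat -> R) (uL uR : nat -> R).

Hypothesis HTpos : forall mu mu', -1 <= mu <= 1 -> -1 <= mu' <= 1 -> 0 < T mu mu'.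
Hypothesis HS : forall t x mu, 0 <= Src t x mu.
Hypothesis HQ : (2 <= Q)%nat.
Hypothesis Hwpos : forall q, (1 <= q <= Q)%nat -> 0 < w q.
Hypothesis Hwsym : w 1%nat = w Q.
Hypothesis Hsa : 0 <= sa.
Hypothesis Hss : 0 <= ss.
Hypothesis Hdt : 0 < dt.
Hypothesis Hdx : 0 < dx.
Hypothesis HCFL : dt / dx < w Q * (1 - (sa + ss) * dt).
Hypothesis Hmean : forall l, (l <= N)%nat -> ubar l = rsum Q (fun q => w q * pv q l).

Let eps := w Q * (1 - (sa + ss) * dt) - dt / dx.

Let eps_pos : 0 < eps.
Proof. unfold eps. lra. Qed.

Let update_density_ge psi C mu :
  -1 <= mu <= 1 ->
  (forall u, 0 <= psi u mu) ->
  (forall q, (1 <= q <= Q)%nat -> 0 <= C q mu + psi (pv q) mu) ->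
  eps * psi (pv Q) mu
    <= update_density Q w dt dx sa ss psi C (fun q => Src tn (xq q)) pv uL uR mu.
Proof.
  intros Hmu Hpsi HC. apply update_density_lower_bound; auto; try lra.
  apply Rlt_le, Rdiv_lt_0_compat; assumption.
Qed.

Lemma realizable_dg_update (alpha : (nat -> R) -> nat -> R) (ff rr : (nat -> R) -> nat -> R)
    (Sm : nat -> nat -> R) :
  (forall mu, b 0%nat mu = 1) ->
  (forall mu, -1 <= mu <= 1 -> IntAB (fun mu' => T mu' mu) (-1) 1 1) ->
  (forall u, Realizable N b u -> forall l, (l <= N)%nat ->
     IntAB (fun mu => b l mu * ansatz N b (alpha u) mu) (-1) 1 (u l)) ->
  (forall u, Realizable N b u -> forall l, (l <= N)%nat ->
     IntAB (fun mu => mu * b l mu * ansatz N b (alpha u) mu) (-1) 1 (ff u l)) ->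
  (forall u, Realizable N b u -> exists Cpsi,
     IsCollision T (ansatz N b (alpha u)) Cpsi /\
     forall l, (l <= N)%nat -> IntAB (fun mu => b l mu * Cpsi mu) (-1) 1 (rr u l)) ->
  (forall q, (1 <= q <= Q)%nat -> forall l, (l <= N)%nat ->
     IntAB (fun mu => b l mu * Src tn (xq q) mu) (-1) 1 (Sm q l)) ->
  (forall q, (1 <= q <= Q)%nat -> Realizable N b (pv q)) ->
  Realizable N b uL -> Realizable N b uR ->
  Realizable N b (dg_update Q w dt dx sa ss ff rr Sm ubar pv uL uR).
Proof.
  intros Hb0 HTnorm Hmom Hflux Hcoll Hsrc Hpv HL HR.
  set (psi := fun u => ansatz N b (alpha u)).
  destruct (functional_choice (fun q Cpsi => (1 <= q <= Q)%nat ->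
      IsCollision T (psi (pv q)) Cpsi /\
      forall l, (l <= N)%nat -> IntAB (fun mu => b l mu * Cpsi mu) (-1) 1 (rr (pv q) l)))
    as [C HC].
  { intros q. destruct (Compare_dec.le_dec 1 q); [destruct (Compare_dec.le_dec q Q)|].
    - destruct (Hcoll _ (Hpv q ltac:(lia))) as [Cpsi HCpsi]. exists Cpsi. auto.
    - exists (fun _ => 0). lia.
    - exists (fun _ => 0). lia. }
  set (phi := update_density Q w dt dx sa ss psi C (fun q => Src tn (xq q)) pv uL uR).
  assert (Hphi_moments : forall l, (l <= N)%nat ->
            IntAB (fun mu => b l mu * phi mu) (-1) 1
                  (dg_update Q w dt dx sa ss ff rr Sm ubar pv uL uR l)).
  { apply (mom_update_density (fun f v => IntAB f (-1) 1 v) (IntAB_zero _ _)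
             (fun f g v v' l => IntAB_axpy _ _ f g v v' l) N Q b (Realizable N b));
      auto; try lia.
    intros q Hq. apply (proj2 (HC q Hq)). }
  assert (Hphi_ge : forall mu, -1 <= mu <= 1 -> eps * psi (pv Q) mu <= phi mu).
  { intros mu Hmu. apply update_density_ge; auto.
    - intros u. apply Rlt_le, ansatz_pos.
    - intros q Hq. apply (collision_gain_nonneg T (psi (pv q)) (C q) mu).
      + intros; apply HTpos; lra.
      + apply HTnorm, Hmu.
      + intros; apply Rlt_le, ansatz_pos.
      + apply (proj1 (HC q Hq)).
      + exact Hmu. }
  assert (HQmass : IntAB (fun mu => eps * psi (pv Q) mu) (-1) 1 (eps * pv Q 0%nat)).
  { apply (mom_scale (fun f v => IntAB f (-1) 1 v) (IntAB_zero _ _)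
             (fun f g v v' l => IntAB_axpy _ _ f g v v' l)).
    eapply (mom_ext (fun f v => IntAB f (-1) 1 v));
      [| |exact (Hmom _ (Hpv Q ltac:(lia)) 0%nat ltac:(lia))];
      intros; unfold psi; cbv beta; rewrite ?Hb0; ring. }
  pose proof eps_pos.
  pose proof (Realizable_mass_pos N b (pv Q) Hb0 (Hpv Q ltac:(lia))).
  apply (Realizable_intro N b _ phi Hb0); [|exact Hphi_moments|].
  - intros mu Hmu. pose proof (Hphi_ge mu Hmu). pose proof (ansatz_pos N b (alpha (pv Q)) mu).
    unfold psi in *. nra.
  - assert (eps * pv Q 0%nat <= dg_update Q w dt dx sa ss ff rr Sm ubar pv uL uR 0%nat).
    { refine (IntAB_le _ _ (-1) 1 _ _ ltac:(lra) _ HQmass (Hphi_moments 0%nat ltac:(lia))).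
      intros mu Hmu. rewrite Hb0, Rmult_1_l. apply Hphi_ge. lra. }
    nra.
Qed.

Lemma num_realizable_dg_update (nQ : nat) (muQ wQ : nat -> R)
    (alphaQ : (nat -> R) -> nat -> R) :
  (forall i, (1 <= i <= nQ)%nat -> -1 <= muQ i <= 1) ->
  (forall i, (1 <= i <= nQ)%nat -> 0 < wQ i) ->
  (forall i, (1 <= i <= nQ)%nat -> rsum nQ (fun i' => wQ i' * T (muQ i') (muQ i)) = 1) ->
  (forall u, NumRealizable N b nQ muQ wQ u -> forall l, (l <= N)%nat ->
     u l = rsum nQ (fun i => wQ i * b l (muQ i) * ansatz N b (alphaQ u) (muQ i))) ->
  (forall q, (1 <= q <= Q)%nat -> NumRealizable N b nQ muQ wQ (pv q)) ->
  NumRealizable N b nQ muQ wQ uL -> NumRealizable N b nQ muQ wQ uR ->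
  NumRealizable N b nQ muQ wQ
    (dg_update Q w dt dx sa ss (fluxQ N b nQ muQ wQ alphaQ) (collmomQ N b T nQ muQ wQ alphaQ)
       (srcQ b nQ muQ wQ Src tn xq) ubar pv uL uR).
Proof.
  intros Hmu HwQ HTnorm Hmom Hpv HL HR.
  set (psi := fun u => ansatz N b (alphaQ u)).
  set (C := fun q => collQ T nQ muQ wQ (psi (pv q))).
  set (phi := update_density Q w dt dx sa ss psi C (fun q => Src tn (xq q)) pv uL uR).
  assert (Hphi_moments : forall l, (l <= N)%nat ->
      quad_moment nQ muQ wQ (fun mu => b l mu * phi mu)
        (dg_update Q w dt dx sa ss (fluxQ N b nQ muQ wQ alphaQ) (collmomQ N b T nQ muQ wQ alphaQ)
           (srcQ b nQ muQ wQ Src tn xq) ubar pv uL uR l)).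
  { apply (mom_update_density (quad_moment nQ muQ wQ) (quad_moment_zero nQ muQ wQ)
             (quad_moment_axpy nQ muQ wQ) N Q b (NumRealizable N b nQ muQ wQ)); auto; try lia;
      intros; unfold quad_moment.
    - rewrite Hmom by assumption. apply rsum_ext; intros; unfold psi; ring.
    - unfold fluxQ. apply rsum_ext; intros; unfold psi; ring.
    - unfold collmomQ. apply rsum_ext; intros; unfold C, psi; ring.
    - unfold srcQ. apply rsum_ext; intros; ring. }
  pose proof eps_pos.
  exists (fun i => phi (muQ i)). split.
  - intros i Hi.
    assert (eps * psi (pv Q) (muQ i) <= phi (muQ i)).
    { apply update_density_ge; [apply Hmu, Hi| |].
      - intros u. apply Rlt_le, ansatz_pos.
      - intros q Hq. apply (collQ_gain_nonneg T nQ muQ wQ (psi (pv q)) (muQ i) HwQ).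
        + intros j Hj. apply HTpos; auto.
        + apply HTnorm, Hi.
        + intros; apply Rlt_le, ansatz_pos. }
    pose proof (ansatz_pos N b (alphaQ (pv Q)) (muQ i)). unfold psi in *. nra.
  - intros l Hl. rewrite (Hphi_moments l Hl). apply rsum_ext; intros; ring.
Qed.

End RealizabilityOfUpdate.

Theorem mainTheorem3
  (N : nat) (b : nat -> R -> R)
  (Hb0 : forall mu, b 0%nat mu = 1)
  (Hbbd : forall l, (l <= N)%nat -> exists M, forall mu, -1 <= mu <= 1 -> Rabs (b l mu) <= M)
  (T : R -> R -> R)
  (HTpos : forall mu mu', -1 <= mu <= 1 -> -1 <= mu' <= 1 -> 0 < T mu mu')
  (HTnorm : forall mu, -1 <= mu <= 1 -> IntAB (fun mu' => T mu' mu) (-1) 1 1)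
  (sa ss : R) (Hsa : 0 <= sa) (Hss : 0 <= ss)
  (Src : R -> R -> R -> R) (HS : forall t x mu, 0 <= Src t x mu)
  (Q : nat) (yGL wGL : nat -> R)
  (HQ : (2 <= Q)%nat)
  (Hy1 : yGL 1%nat = - / 2) (HyQ : yGL Q = / 2)
  (Hyinc : forall q, (1 <= q < Q)%nat -> yGL q < yGL (S q))
  (Hwpos : forall q, (1 <= q <= Q)%nat -> 0 < wGL q)
  (Hwsum : rsum Q wGL = 1)
  (Hwsym : wGL 1%nat = wGL Q)
  (Hexact : forall m, (m <= 2 * Q - 3)%nat ->
      IntAB (fun y => y ^ m) (- / 2) (/ 2) (rsum Q (fun q => wGL q * yGL q ^ m)))
  (* DG data on cell I_j : u_j(t^n,x) = sum_{m<=k} c l m x^m (component l) *)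
  (k : nat) (Hk : (k <= 2 * Q - 3)%nat)
  (c : nat -> nat -> R) (xj dx dt tn : R)
  (Hdx : 0 < dx) (Hdt : 0 < dt)
  (ubar : nat -> R)
  (Hubar : forall l, (l <= N)%nat ->
      IntAB (fun x => sum_f_R0 (fun m => c l m * x ^ m) k)
            (xj - dx / 2) (xj + dx / 2) (dx * ubar l))
  (* neighbour edge values u^n_{(j-1)Q}, u^n_{(j+1)1} *)
  (uL uR : nat -> R)
  (HCFL : dt / dx < wGL Q * (1 - (sa + ss) * dt)) :
  let xq := fun q => xj + yGL q * dx in
  let pv := fun q l => sum_f_R0 (fun m => c l m * xq q ^ m) k in
  (forall (alpha : (nat -> R) -> nat -> R) (ff rr : (nat -> R) -> nat -> R)
          (Sm : nat -> nat -> R),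
     (forall u, Realizable N b u -> forall l, (l <= N)%nat ->
        IntAB (fun mu => b l mu * ansatz N b (alpha u) mu) (-1) 1 (u l)) ->
     (forall u, Realizable N b u -> forall l, (l <= N)%nat ->
        IntAB (fun mu => mu * b l mu * ansatz N b (alpha u) mu) (-1) 1 (ff u l)) ->
     (forall u, Realizable N b u -> exists Cpsi,
        IsCollision T (ansatz N b (alpha u)) Cpsi /\
        forall l, (l <= N)%nat -> IntAB (fun mu => b l mu * Cpsi mu) (-1) 1 (rr u l)) ->
     (forall q, (1 <= q <= Q)%nat -> forall l, (l <= N)%nat ->
        IntAB (fun mu => b l mu * Src tn (xq q) mu) (-1) 1 (Sm q l)) ->
     (forall q, (1 <= q <= Q)%nat -> Realizable N b (pv q)) ->
     Realizable N b uL -> Realizable N b uR ->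
     Realizable N b (dg_update Q wGL dt dx sa ss ff rr Sm ubar pv uL uR))
  /\
  (forall (nQ : nat) (muQ wQ : nat -> R) (alphaQ : (nat -> R) -> nat -> R),
     (1 <= nQ)%nat ->
     (forall i, (1 <= i <= nQ)%nat -> -1 <= muQ i <= 1) ->
     (forall i, (1 <= i <= nQ)%nat -> 0 < wQ i) ->
     (forall i, (1 <= i <= nQ)%nat ->
        rsum nQ (fun i' => wQ i' * T (muQ i') (muQ i)) = 1) ->
     (forall u, NumRealizable N b nQ muQ wQ u -> forall l, (l <= N)%nat ->
        u l = rsum nQ (fun i => wQ i * b l (muQ i) * ansatz N b (alphaQ u) (muQ i))) ->
     (forall q, (1 <= q <= Q)%nat -> NumRealizable N b nQ muQ wQ (pv q)) ->
     NumRealizable N b nQ muQ wQ uL -> NumRealizable N b nQ muQ wQ uR ->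
     NumRealizable N b nQ muQ wQ
       (dg_update Q wGL dt dx sa ss
          (fluxQ N b nQ muQ wQ alphaQ) (collmomQ N b T nQ muQ wQ alphaQ)
          (srcQ b nQ muQ wQ Src tn xq) ubar pv uL uR)).
Proof.
  intros xq pv.
  assert (Hmean : forall l, (l <= N)%nat -> ubar l = rsum Q (fun q => wGL q * pv q l)).
  { intros l Hl. exact (cell_mean_gauss_lobatto Q yGL wGL Hexact k (c l) xj dx (ubar l)
                          Hk Hdx (Hubar l Hl)). }
  split.
  - intros alpha ff rr Sm Hmom Hflux Hcoll Hsrc Hpv HL HR.
    eapply realizable_dg_update; eassumption.
  - intros nQ muQ wQ alphaQ _ Hmu HwQ HTnorm' Hmom Hpv HL HR.
    eapply num_realizable_dg_update; eassumption.
Qed.
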